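(* Let $$A = \begin{pmatrix} p & q \\ r & s \end{pmatrix} \qquad \text{and} \qquad B = \begin{pmatrix} p' & q' \\ r' & s' \end{pmatrix}$$ be elements of $Y(\mathbb{Z}[\omega]) - \{ I_2 \}$. If $rs' - r's = 0$ then $A = B$.
   Context: Let $\omega = e^{2\pi i/3}$ and let $\mathbb{Z}[\omega]$ be the ring of Eisenstein integers (a PID), with unit group $\mathbb{Z}[\omega]^{\times} = \{\pm 1, \pm\omega, \pm\omega^2\}$. Fix a set of representatives $(\mathbb{Z}[\omega] - \{0\})/\mathbb{Z}[\omega]^{\times}$ of the nonzero elements up to units, and for each nonzero $c$ a set of representatives $\mathbb{Z}[\omega]/c\mathbb{Z}[\omega]$ of the residue classes modulo $c$ (these representatives are regarded as elements of $\mathbb{Z}[\omega]$). Define $$Y(\mathbb{Z}[\omega]) = \Big\{ \begin{pmatrix} a & b \\ c & d \end{pmatrix} \in SL_2(\mathbb{Z}[\omega]) \;\Big\vert\; c \in (\mathbb{Z}[\omega] - \{0\})/\mathbb{Z}[\omega]^{\times},\ a \in \mathbb{Z}[\omega]/c\mathbb{Z}[\omega] \Big\} \cup \{ I_2 \},$$ where $I_2$ is the $2\times 2$ identity matrix. *)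

(* The Eisenstein integers Z[w], w = exp(2 pi i/3), are
   modelled concretely as pairs (a,b) of integers standing for a + b w,
   with multiplication determined by w^2 = -1 - w (w^2 + w + 1 = 0). *)
From HB Require Import structures.
From mathcomp Require Import all_boot all_order all_algebra.
From mathcomp Require Import ring.
Set Implicit Arguments. Unset Strict Implicit. Unset Printing Implicit Defensive.
Import Order.TTheory GRing.Theory Num.Theory.
Local Open Scope ring_scope.

Variant eis := Eis of int & int.

Definition eis_re (x : eis) := let: Eis a _ := x in a.
Definition eis_om (x : eis) := let: Eis _ b := x in b.
Definition eis2p (x : eis) : int * int := (eis_re x, eis_om x).
Definition p2eis (p : int * int) : eis := Eis p.1 p.2.
Lemma eis2pK : cancel eis2p p2eis. Proof. by case. Qed.

HB.instance Definition _ := Countable.copy eis (can_type eis2pK).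

Definition eis_zero := Eis 0 0.
Definition eis_one := Eis 1 0.
Definition eis_w := Eis 0 1.
Definition eis_opp (x : eis) := Eis (- eis_re x) (- eis_om x).
Definition eis_add (x y : eis) := Eis (eis_re x + eis_re y) (eis_om x + eis_om y).
(* (a + b w)(c + d w) = (ac - bd) + (ad + bc - bd) w *)
Definition eis_mul (x y : eis) :=
  Eis (eis_re x * eis_re y - eis_om x * eis_om y)
      (eis_re x * eis_om y + eis_om x * eis_re y - eis_om x * eis_om y).

Lemma eis_addA : associative eis_add.
Proof. by move=> [a b] [c d] [e f]; rewrite /eis_add /=; congr Eis; ring. Qed.
Lemma eis_addC : commutative eis_add.
Proof. by move=> [a b] [c d]; rewrite /eis_add /=; congr Eis; ring. Qed.
Lemma eis_add0 : left_id eis_zero eis_add.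
Proof. by move=> [a b]; rewrite /eis_add /=; congr Eis; ring. Qed.
Lemma eis_addN : left_inverse eis_zero eis_opp eis_add.
Proof. by move=> [a b]; rewrite /eis_add /=; congr Eis; ring. Qed.

HB.instance Definition _ := GRing.isZmodule.Build eis eis_addA eis_addC eis_add0 eis_addN.

Lemma eis_mulA : associative eis_mul.
Proof. by move=> [a b] [c d] [e f]; rewrite /eis_mul /=; congr Eis; ring. Qed.
Lemma eis_mulC : commutative eis_mul.
Proof. by move=> [a b] [c d]; rewrite /eis_mul /=; congr Eis; ring. Qed.
Lemma eis_mul1 : left_id eis_one eis_mul.
Proof. by move=> [a b]; rewrite /eis_mul /=; congr Eis; ring. Qed.
Lemma eis_mulDl : left_distributive eis_mul eis_add.
Proof. by move=> [a b] [c d] [e f]; rewrite /eis_mul /= /eis_add /=; congr Eis; ring. Qed.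
Lemma eis_one_neq0 : eis_one != (0 : eis).
Proof. by []. Qed.

HB.instance Definition _ :=
  GRing.Zmodule_isComNzRing.Build eis eis_mulA eis_mulC eis_mul1 eis_mulDl eis_one_neq0.

Lemma eis_w_cyclo : eis_w * eis_w + eis_w + 1 = 0.
Proof. by []. Qed.

Definition eis_unit (u : eis) : Prop := exists v : eis, u * v = 1.

Definition eis_assoc (x y : eis) : Prop := exists u : eis, eis_unit u /\ y = u * x.

Definition eis_dvd (c x : eis) : Prop := exists k : eis, x = c * k.

Definition nonzero_unit_reps (S : eis -> Prop) : Prop :=
  (forall x, S x -> x <> 0) /\
  (forall c, c <> 0 -> exists x, S x /\ eis_assoc c x) /\
  (forall x y, S x -> S y -> eis_assoc x y -> x = y).

Definition residue_reps (c : eis) (T : eis -> Prop) : Prop :=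
  (forall a, exists x, T x /\ eis_dvd c (a - x)) /\
  (forall x y, T x -> T y -> eis_dvd c (x - y) -> x = y).

Definition i0 : 'I_2 := ord0.
Definition i1 : 'I_2 := ord_max.

(* Y(Z[w]) for the chosen representative systems S and T:
   M = [[a, b], [c, d]] in SL_2(Z[w]) with c in S and a in T c, or M = I_2. *)
Definition inY (S : eis -> Prop) (T : eis -> eis -> Prop) (M : 'M[eis]_2) : Prop :=
  (\det M = 1 /\ S (M i1 i0) /\ T (M i1 i0) (M i0 i0)) \/ M = 1%:M.

(** The bottom rows (r, s) and (r', s') of A and B are unimodular, so
    r' = r (p s' - q r') and r = r' (p' s - q' r): the entries r and r' are
    associates, hence equal as chosen representatives, and then s = s'.  From
    p s - q r = 1 = p' s - q' r one gets r | p - p', so p = p' as chosen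
    residues, and finally q = q'.  All cancellations are by the nonzero r,
    which is regular because the norm of Z[w] is multiplicative and
    anisotropic. *)
From mathcomp Require Import all_boot all_algebra ring.
Set Implicit Arguments.
Unset Strict Implicit.
Unset Printing Implicit Defensive.

Import GRing.Theory Num.Theory.
Local Open Scope ring_scope.

Section TwoByTwoMatrices.
Variable R : comPzRingType.

Lemma det_mx22 (M : 'M[R]_2) :
  \det M = M i0 i0 * M i1 i1 - M i0 i1 * M i1 i0.
Proof.
rewrite (expand_det_row _ i0) !big_ord_recl big_ord0 /cofactor !det_mx11 !mxE.
have -> : lift i0 ord0 = i1 by apply/val_inj.
have -> : lift i1 ord0 = i0 by apply/val_inj.
by rewrite /= expr0 expr1 addr0 mul1r mulN1r mulrN.
Qed.

Lemma mx22P (A B : 'M[R]_2) :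
  A i0 i0 = B i0 i0 -> A i0 i1 = B i0 i1 ->
  A i1 i0 = B i1 i0 -> A i1 i1 = B i1 i1 -> A = B.
Proof.
have ord2 (i : 'I_2) : i = i0 \/ i = i1.
  by case: i => [[|[|//]]] ?; [left | right]; apply/val_inj.
move=> e00 e01 e10 e11; apply/matrixP => i j.
by case: (ord2 i) => ->; case: (ord2 j) => ->.
Qed.

End TwoByTwoMatrices.

Section UnimodularRows.
Variable R : comPzRingType.
Variables p q r s : R.
Hypothesis det1 : p * s - q * r = 1.

Lemma unimodular_cross_dvd r' s' : r * s' = r' * s -> r' = r * (p * s' - q * r').
Proof.
move=> cross; rewrite -[LHS]mulr1 -det1.
transitivity (p * (r' * s) - q * r * r'); first by ring.
by rewrite -cross; ring.
Qed.

Lemma unimodular_top_left_congr p' q' :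
  p' * s - q' * r = 1 -> p - p' = r * (p * (q - q') - (p - p') * q).
Proof.
move=> det1'; rewrite -[LHS]mulr1 -det1.
transitivity (p * ((p - p') * s) - (p - p') * q * r); first by ring.
have -> : (p - p') * s = (q - q') * r.
  apply/eqP; rewrite -subr_eq0 -(subrr 1) -{1}det1 -det1'; apply/eqP; ring.
by ring.
Qed.

Lemma unimodular_top_right_eq q' :
  GRing.lreg r -> p * s - q' * r = 1 -> q = q'.
Proof.
move=> rreg det1'; apply: rreg; apply/eqP.
by rewrite -subr_eq0 -(subrr 1) -{1}det1' -det1; apply/eqP; ring.
Qed.

End UnimodularRows.

Lemma lreg_dvd_antisym_mul1 (R : comPzRingType) (x y k m : R) :
  GRing.lreg x -> y = x * k -> x = y * m -> k * m = 1.
Proof. by move=> xreg yE xE; apply: xreg; rewrite mulr1 mulrA -yE -xE. Qed.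

Definition eis_norm (x : eis) : int :=
  eis_re x ^+ 2 - eis_re x * eis_om x + eis_om x ^+ 2.

Lemma eis_normM x y : eis_norm (x * y) = eis_norm x * eis_norm y.
Proof. by case: x => a b; case: y => c d; rewrite /eis_norm /=; ring. Qed.

Lemma eis_norm_eq0 x : eis_norm x = 0 -> x = 0.
Proof.
case: x => a b; rewrite /eis_norm /= => N0.
have : (2 * a - b) ^+ 2 + 3 * b ^+ 2 == 0.
  have -> : (2 * a - b) ^+ 2 + 3 * b ^+ 2 = 4 * (a ^+ 2 - a * b + b ^+ 2) by ring.
  by rewrite N0 mulr0.
rewrite paddr_eq0 ?sqr_ge0 ?(mulr_ge0 _ (sqr_ge0 _)) // !sqrf_eq0 mulf_eq0 /= sqrf_eq0.
by case/andP=> + /eqP b0; rewrite b0 subr0 mulf_eq0 /= => /eqP ->.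
Qed.

Lemma eis_lreg (x : eis) : x != 0 -> GRing.lreg x.
Proof.
move=> /eqP x_neq0; apply: mulrI0_lreg => y /(congr1 eis_norm).
rewrite eis_normM => /eqP; rewrite mulf_eq0 => /orP[] /eqP /eis_norm_eq0 //.
Qed.

Lemma eis_assoc_dvd_antisym (x y k m : eis) :
  GRing.lreg x -> y = x * k -> x = y * m -> eis_assoc x y.
Proof.
move=> xreg yE xE; exists k; split; last by rewrite mulrC.
by exists m; exact: lreg_dvd_antisym_mul1 xreg yE xE.
Qed.

Theorem lemma2p13 (S : eis -> Prop) (T : eis -> eis -> Prop)
  (hS : nonzero_unit_reps S)
  (hT : forall c : eis, c <> 0 -> residue_reps c (T c))
  (A B : 'M[eis]_2)
  (hA : inY S T A) (hB : inY S T B)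
  (hA1 : A <> 1%:M) (hB1 : B <> 1%:M)
  (hrs : A i1 i0 * B i1 i1 - B i1 i0 * A i1 i1 = 0) :
  A = B.
Proof.
case: hA => [[detA [SA TA]]|//]; case: hB => [[detB [SB TB]]|//].
rewrite det_mx22 in detA; rewrite det_mx22 in detB.
have [S_neq0 [_ S_uniq]] := hS.
have r_neq0 := S_neq0 _ SA.
have r_reg : GRing.lreg (A i1 i0) by apply/eis_lreg/eqP.
move/eqP: hrs; rewrite subr_eq0 => /eqP cross.
have r'E := unimodular_cross_dvd detA cross.
have rE := unimodular_cross_dvd detB (esym cross).
have rr' : A i1 i0 = B i1 i0.
  by apply: S_uniq => //; exact: eis_assoc_dvd_antisym r_reg r'E rE.
rewrite -rr' in cross TB detB.
have ss' : A i1 i1 = B i1 i1 by apply: r_reg; rewrite cross mulrC.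
rewrite -ss' in detB.
have pp' : A i0 i0 = B i0 i0.
  have [_ T_uniq] := hT _ r_neq0.
  apply: T_uniq => //; rewrite (unimodular_top_left_congr detA detB).
  by eexists.
rewrite -pp' in detB.
have qq' := unimodular_top_right_eq detA r_reg detB.
exact: mx22P.
Qed.
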